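(* Let $\mathcal E$ be a relation on closed values and $v_0,v_1$ closed values with $v_0\approx^p_{\mathcal E}v_1$. Then for every context $C$ such that $C[v_0]$ and $C[v_1]$ are closed, $C[v_0]\approx^p_{\mathcal E}C[v_1]$.
   Context: Terms of $\lambda_S$: $t ::= x \mid \lambda x.t \mid t\,t \mid \mathcal{S}k.t \mid \langle t\rangle$ (shift binds $k$; $\langle\cdot\rangle$ reset), up to $\alpha$-conversion. Values $v::=\lambda x.t$. Pure contexts $E ::= \Box \mid v\,E \mid E\,t$; evaluation contexts $F ::= \Box \mid v\,F \mid F\,t \mid \langle F\rangle$; contexts $C ::= \Box \mid \lambda x.C \mid t\,C \mid C\,t \mid \mathcal{S}k.C \mid \langle C\rangle$. Reduction: $F[(\lambda x.t)v]\to F[t\{v/x\}]$; $F[\langle E[\mathcal Sk.t]\rangle]\to F[\langle t\{\lambda x.\langle E[x]\rangle/k\}\rangle]$ ($x\notin\mathrm{fv}(E)$); $F[\langle v\rangle]\to F[v]$; $\to^*$ reflexive-transitive closure. Program: term $\langle t\rangle$ (ranged over by $p$). Closures: for $R$ a relation on closed terms, $\widetilde R$ is the smallest relation containing $R$, all $(x,x)$, closed under all term constructors, restricted to closed terms; $\widehat R$ is the smallest relation on closed evaluation contexts with $\Box\widehat R\Box$, $v_0F_0\widehat Rv_1F_1$ if $F_0\widehat RF_1,v_0\widetilde Rv_1$; $F_0t_0\widehat RF_1t_1$ if $F_0\widehat RF_1,t_0\widetilde Rt_1$; $\langle F_0\rangle\widehat R\langle F_1\rangle$ if $F_0\widehat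 RF_1$. Environmental bisimilarity for programs: an environment $\mathcal E$ is a relation on closed values; an environmental relation $\mathcal X$ is a set of environments and triples $(\mathcal E,t_0,t_1)$, $t_0,t_1$ closed, written $t_0\mathcal X_{\mathcal E}t_1$. $\mathcal X$ is an environmental bisimulation for programs if (1) if $t_0\mathcal X_{\mathcal E}t_1$ and $t_0,t_1$ are not both programs, then for all pure $E_0\widehat{\mathcal E}E_1$, $\langle E_0[t_0]\rangle\mathcal X_{\mathcal E}\langle E_1[t_1]\rangle$; (2) if $p_0\mathcal X_{\mathcal E}p_1$: (a) $p_0\to p_0'$ (program) implies $p_1\to^*p_1'$ (program) with $p_0'\mathcal X_{\mathcal E}p_1'$; (b) $p_0\to v_0$ implies $p_1\to^*v_1$ and $\{(v_0,v_1)\}\cup\mathcal E\in\mathcal X$; (c) symmetric conditions; (3) for $\mathcal E\in\mathcal X$, $(\lambda x.t_0)\mathcal E(\lambda x.t_1)$ and $v_0\widetilde{\mathcal E}v_1$ imply $t_0\{v_0/x\}\mathcal X_{\mathcal E}t_1\{v_1/x\}$. $\approx^p$ is the largest such relation; $t_0\approx^p_{\mathcal E}t_1$ means $(\mathcal E,t_0,t_1)\in\approx^p$. *)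

(* lambda_S (shift/reset) with de Bruijn indices (alpha-conversion built in). *)
From Stdlib Require Import Arith Relations.

Inductive term : Type :=
| Var   : nat -> term
| Lam   : term -> term
| App   : term -> term -> term
| Shift : term -> term          (* S k. t, k = index 0 in body *)
| Reset : term -> term.

Definition is_value (t : term) : Prop :=
  match t with Lam _ => True | _ => False end.

Fixpoint closed_at (n : nat) (t : term) : Prop :=
  match t with
  | Var m => m < n
  | Lam b => closed_at (S n) b
  | App a b => closed_at n a /\ closed_at n b
  | Shift b => closed_at (S n) b
  | Reset b => closed_at n b
  end.

Definition closed (t : term) : Prop := closed_at 0 t.

Fixpoint lift (c : nat) (t : term) : term :=
  match t with
  | Var n => if n <? c then Var n else Var (S n)
  | Lam b => Lam (lift (S c) b)
  | App a b => App (lift c a) (lift c b)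
  | Shift b => Shift (lift (S c) b)
  | Reset b => Reset (lift c b)
  end.

Fixpoint subst (j : nat) (s : term) (t : term) : term :=
  match t with
  | Var n => if n =? j then s else if j <? n then Var (pred n) else Var n
  | Lam b => Lam (subst (S j) (lift 0 s) b)
  | App a b => App (subst j s a) (subst j s b)
  | Shift b => Shift (subst (S j) (lift 0 s) b)
  | Reset b => Reset (subst j s b)
  end.

Definition subst0 (v t : term) : term := subst 0 v t.

(* Evaluation-context syntax F ::= [] | v F | F t | <F>; pure contexts have no reset. *)
Inductive fctx : Type :=
| FHole : fctx
| FAppR : term -> fctx -> fctx
| FAppL : fctx -> term -> fctx
| FReset : fctx -> fctx.

Fixpoint plugF (F : fctx) (t : term) : term :=
  match F with
  | FHole => t
  | FAppR v F' => App v (plugF F' t)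
  | FAppL F' u => App (plugF F' t) u
  | FReset F' => Reset (plugF F' t)
  end.

Fixpoint liftF (c : nat) (F : fctx) : fctx :=
  match F with
  | FHole => FHole
  | FAppR v F' => FAppR (lift c v) (liftF c F')
  | FAppL F' u => FAppL (liftF c F') (lift c u)
  | FReset F' => FReset (liftF c F')
  end.

Fixpoint evalctx (F : fctx) : Prop :=
  match F with
  | FHole => True
  | FAppR v F' => is_value v /\ evalctx F'
  | FAppL F' _ => evalctx F'
  | FReset F' => evalctx F'
  end.

Fixpoint purectx (F : fctx) : Prop :=
  match F with
  | FHole => True
  | FAppR v F' => is_value v /\ purectx F'
  | FAppL F' _ => purectx F'
  | FReset _ => False
  end.

Inductive step : term -> term -> Prop :=
| step_beta F t v : evalctx F -> is_value v ->
    step (plugF F (App (Lam t) v)) (plugF F (subst0 v t))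
| step_shift F E t : evalctx F -> purectx E ->
    step (plugF F (Reset (plugF E (Shift t))))
         (plugF F (Reset (subst0 (Lam (Reset (plugF (liftF 0 E) (Var 0)))) t)))
| step_reset F v : evalctx F -> is_value v ->
    step (plugF F (Reset v)) (plugF F v).

Definition steps : term -> term -> Prop := clos_refl_trans term step.

Definition is_program (t : term) : Prop :=
  match t with Reset _ => True | _ => False end.

(* General contexts C (may capture variables of the plugged term). *)
Inductive ctx : Type :=
| CHole : ctx
| CLam : ctx -> ctx
| CAppL : ctx -> term -> ctx
| CAppR : term -> ctx -> ctx
| CShift : ctx -> ctx
| CReset : ctx -> ctx.

Fixpoint plugC (C : ctx) (t : term) : term :=
  match C with
  | CHole => t
  | CLam C' => Lam (plugC C' t)
  | CAppL C' u => App (plugC C' t) u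
  | CAppR u C' => App u (plugC C' t)
  | CShift C' => Shift (plugC C' t)
  | CReset C' => Reset (plugC C' t)
  end.

Definition rel := term -> term -> Prop.

Inductive tilde_open (R : rel) : rel :=
| to_base t0 t1 : R t0 t1 -> tilde_open R t0 t1
| to_var n : tilde_open R (Var n) (Var n)
| to_lam a0 a1 : tilde_open R a0 a1 -> tilde_open R (Lam a0) (Lam a1)
| to_app a0 a1 b0 b1 : tilde_open R a0 a1 -> tilde_open R b0 b1 ->
    tilde_open R (App a0 b0) (App a1 b1)
| to_shift a0 a1 : tilde_open R a0 a1 -> tilde_open R (Shift a0) (Shift a1)
| to_reset a0 a1 : tilde_open R a0 a1 -> tilde_open R (Reset a0) (Reset a1).

Definition tilde (R : rel) : rel :=
  fun t0 t1 => tilde_open R t0 t1 /\ closed t0 /\ closed t1.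

Inductive hat (R : rel) : fctx -> fctx -> Prop :=
| hat_hole : hat R FHole FHole
| hat_appR v0 v1 F0 F1 : is_value v0 -> is_value v1 -> hat R F0 F1 ->
    tilde R v0 v1 -> hat R (FAppR v0 F0) (FAppR v1 F1)
| hat_appL F0 F1 t0 t1 : hat R F0 F1 -> tilde R t0 t1 ->
    hat R (FAppL F0 t0) (FAppL F1 t1)
| hat_reset F0 F1 : hat R F0 F1 -> hat R (FReset F0) (FReset F1).

Definition env_ok (E : rel) : Prop :=
  forall a b, E a b -> is_value a /\ closed a /\ is_value b /\ closed b.

(* an environmental relation: a set of environments and of triples *)
Record envrel : Type := {
  X_env : rel -> Prop;
  X_tri : rel -> term -> term -> Prop
}.

Definition add_pair (v0 v1 : term) (E : rel) : rel :=
  fun a b => (a = v0 /\ b = v1) \/ E a b.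

Definition env_bisim_p (X : envrel) : Prop :=
  (forall E, X_env X E -> env_ok E) /\
  (forall E t0 t1, X_tri X E t0 t1 -> env_ok E /\ closed t0 /\ closed t1) /\
  (* (1) *)
  (forall E t0 t1, X_tri X E t0 t1 -> ~ (is_program t0 /\ is_program t1) ->
     forall E0 E1, purectx E0 -> purectx E1 -> hat E E0 E1 ->
       X_tri X E (Reset (plugF E0 t0)) (Reset (plugF E1 t1))) /\
  (* (2a), (2b) *)
  (forall E p0 p1, is_program p0 -> is_program p1 -> X_tri X E p0 p1 ->
     (forall p0', step p0 p0' -> is_program p0' ->
        exists p1', steps p1 p1' /\ is_program p1' /\ X_tri X E p0' p1') /\
     (forall v0, step p0 v0 -> is_value v0 ->
        exists v1, steps p1 v1 /\ is_value v1 /\ X_env X (add_pair v0 v1 E))) /\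
  (* (2c) symmetric conditions *)
  (forall E p0 p1, is_program p0 -> is_program p1 -> X_tri X E p0 p1 ->
     (forall p1', step p1 p1' -> is_program p1' ->
        exists p0', steps p0 p0' /\ is_program p0' /\ X_tri X E p0' p1') /\
     (forall v1, step p1 v1 -> is_value v1 ->
        exists v0, steps p0 v0 /\ is_value v0 /\ X_env X (add_pair v0 v1 E))) /\
  (* (3) *)
  (forall E, X_env X E ->
     forall b0 b1 v0 v1, E (Lam b0) (Lam b1) -> is_value v0 -> is_value v1 ->
       tilde E v0 v1 -> X_tri X E (subst0 v0 b0) (subst0 v1 b1)).

(* \approx^p : the largest environmental bisimulation for programs (union of all) *)
Definition approx_p (E : rel) (t0 t1 : term) : Prop :=
  exists X, env_bisim_p X /\ X_tri X E t0 t1.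

From Stdlib Require Import Arith Lia Relations FunctionalExtensionality PropExtensionality.

(* If [v0] and [v1] are bisimilar at [E], running [<v0>] and [<v1>] shows that
   some bisimulation [X] contains the environment [E] extended with [(v0, v1)].
   Close [X] under compatible closure and under evaluation contexts around related
   programs; the result is again a bisimulation.  A step of a compatibly related
   program is matched by the same step on the other side, except when a redex
   applies two abstractions related by the environment of [X]: clause (3) of [X]
   then relates the contracta, and clause (1) wraps them in the pure part of the
   surrounding context below its innermost reset, giving related programs.  A step inside a context around related programs is
   a step of the inner program, matched by [X]; when it returns, the returned
   values join the environment and the terms become compatibly related again.
   Since [C[v0]] and [C[v1]] are compatibly related, they are bisimilar. *)

(** * Closed terms *)

Lemma lift_closed_at t n c : closed_at n t -> n <= c -> lift c t = t.
Proof.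
  revert n c; induction t; simpl; intros n' c Ht Hle.
  - destruct (Nat.ltb_spec n c); [reflexivity | lia].
  - f_equal; apply IHt with (S n'); auto; lia.
  - destruct Ht; f_equal; eauto.
  - f_equal; apply IHt with (S n'); auto; lia.
  - f_equal; eauto.
Qed.

Lemma subst_closed_at t n j s : closed_at n t -> n <= j -> subst j s t = t.
Proof.
  revert n j s; induction t; simpl; intros n' j s Ht Hle.
  - destruct (Nat.eqb_spec n j); [lia |].
    destruct (Nat.ltb_spec j n); [lia | reflexivity].
  - f_equal; apply IHt with (S n'); auto; lia.
  - destruct Ht; f_equal; eauto.
  - f_equal; apply IHt with (S n'); auto; lia.
  - f_equal; eauto.
Qed.

Lemma closed_at_lift t n c : closed_at n t -> closed_at (S n) (lift c t).
Proof.
  revert n c; induction t; simpl; intros n' c Ht.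
  - destruct (n <? c); simpl; lia.
  - auto.
  - destruct Ht; auto.
  - auto.
  - auto.
Qed.

Lemma closed_at_subst t n j s :
  closed_at (S n) t -> closed_at n s -> j <= n -> closed_at n (subst j s t).
Proof.
  revert n j s; induction t; simpl; intros n' j s Ht Hs Hj.
  - destruct (Nat.eqb_spec n j); auto.
    destruct (Nat.ltb_spec j n); simpl; lia.
  - apply IHt; auto using closed_at_lift; lia.
  - destruct Ht; auto.
  - apply IHt; auto using closed_at_lift; lia.
  - auto.
Qed.

Lemma closed_at_plugF_inv F t n : closed_at n (plugF F t) -> closed_at n t.
Proof. induction F; simpl; intros; auto; destruct H; auto. Qed.

Lemma closed_at_plugF F t t' n :
  closed_at n (plugF F t) -> closed_at n t' -> closed_at n (plugF F t').
Proof. induction F; simpl; intros; auto; destruct H; auto. Qed.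

Lemma closed_at_plugF_liftF_Var0 E x n c :
  closed_at n (plugF E x) -> closed_at (S n) (plugF (liftF c E) (Var 0)).
Proof.
  induction E; simpl; intros H; try lia; auto.
  - destruct H; split; auto using closed_at_lift.
  - destruct H; split; auto using closed_at_lift.
Qed.

(** * Evaluation contexts *)

Fixpoint fctx_comp (F H : fctx) : fctx :=
  match F with
  | FHole => H
  | FAppR v F' => FAppR v (fctx_comp F' H)
  | FAppL F' u => FAppL (fctx_comp F' H) u
  | FReset F' => FReset (fctx_comp F' H)
  end.

Lemma plugF_comp F H x : plugF (fctx_comp F H) x = plugF F (plugF H x).
Proof. induction F; simpl; congruence. Qed.

Lemma fctx_comp_hole F : fctx_comp F FHole = F.
Proof. induction F; simpl; congruence. Qed.

Lemma evalctx_comp F H : evalctx F -> evalctx H -> evalctx (fctx_comp F H).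
Proof. induction F; simpl; tauto. Qed.

Lemma evalctx_comp_inv F H : evalctx (fctx_comp F H) -> evalctx H.
Proof. induction F; simpl; tauto. Qed.

Lemma purectx_comp_inv F H : purectx (fctx_comp F H) -> purectx H.
Proof. induction F; simpl; tauto. Qed.

Lemma purectx_evalctx F : purectx F -> evalctx F.
Proof. induction F; simpl; tauto. Qed.

Lemma is_value_dec t : is_value t \/ ~ is_value t.
Proof. destruct t; simpl; tauto. Qed.

Lemma is_program_dec t : is_program t \/ ~ is_program t.
Proof. destruct t; simpl; tauto. Qed.

Lemma purectx_dec F : purectx F \/ ~ purectx F.
Proof. induction F; simpl; try tauto. destruct (is_value_dec t); tauto. Qed.

Lemma plugF_is_value F x : is_value (plugF F x) -> F = FHole /\ is_value x.
Proof. destruct F; simpl; tauto. Qed.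

Lemma plugF_is_program_nonpure F x :
  is_program (plugF F x) -> ~ is_program x -> ~ purectx F.
Proof. destruct F; simpl; tauto. Qed.

Lemma plugF_decomp F F' a b :
  evalctx F -> evalctx F' -> ~ is_value a -> ~ is_value b ->
  plugF F a = plugF F' b ->
  (exists H, F' = fctx_comp F H /\ a = plugF H b) \/
  (exists H, F = fctx_comp F' H /\ b = plugF H a).
Proof.
  revert F'; induction F; intros F' HF HF' Ha Hb Heq; simpl in *.
  - left; exists F'; auto.
  - destruct F'; simpl in *; try discriminate.
    + right; exists (FAppR t F); auto.
    + injection Heq as <- Heq.
      destruct (IHF F') as [[H [-> ->]] | [H [-> ->]]]; try tauto;
        [left | right]; exists H; auto.
    + injection Heq as Heq _. destruct HF as [Hv _]. rewrite Heq in Hv.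
      apply plugF_is_value in Hv; tauto.
  - destruct F'; simpl in *; try discriminate.
    + right; exists (FAppL F t); auto.
    + injection Heq as Heq _. destruct HF' as [Hv _]. rewrite <- Heq in Hv.
      apply plugF_is_value in Hv; tauto.
    + injection Heq as Heq <-.
      destruct (IHF F') as [[H [-> ->]] | [H [-> ->]]]; try tauto;
        [left | right]; exists H; auto.
  - destruct F'; simpl in *; try discriminate.
    + right; exists (FReset F); auto.
    + injection Heq as Heq.
      destruct (IHF F') as [[H [-> ->]] | [H [-> ->]]]; try tauto;
        [left | right]; exists H; auto.
Qed.

(** * Reduction *)

Lemma step_closed t t' : step t t' -> closed t -> closed t'.
Proof.
  unfold closed; intros Hs Hc; destruct Hs;
    apply (closed_at_plugF _ _ _ _ Hc); apply closed_at_plugF_inv in Hc; simpl in *; unfold subst0.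
  - destruct Hc; apply closed_at_subst; auto.
  - apply closed_at_subst; auto.
    + exact (closed_at_plugF_inv _ _ _ Hc).
    + simpl; eapply closed_at_plugF_liftF_Var0; eauto.
  - exact Hc.
Qed.

Lemma step_plugF F a b : evalctx F -> step a b -> step (plugF F a) (plugF F b).
Proof.
  intros HF Hs; destruct Hs; rewrite <- !plugF_comp.
  - apply step_beta; auto using evalctx_comp.
  - apply step_shift; auto using evalctx_comp.
  - apply step_reset; auto using evalctx_comp.
Qed.

Lemma steps_plugF F a b : evalctx F -> steps a b -> steps (plugF F a) (plugF F b).
Proof.
  intros HF Hs; induction Hs.
  - apply rt_step, step_plugF; auto.
  - apply rt_refl.
  - eapply rt_trans; eauto.
Qed.

Lemma plugF_Reset_not_value H q : ~ is_value (plugF H (Reset q)).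
Proof. intros Hv; apply plugF_is_value in Hv; simpl in Hv; tauto. Qed.

Lemma purectx_plugF_Shift_neq E H t q :
  purectx E -> evalctx H -> plugF E (Shift t) <> plugF H (Reset q).
Proof.
  intros HE HH Heq.
  destruct (plugF_decomp E H (Shift t) (Reset q)) as [[H' [_ Ht]] | [H' [-> Hq]]];
    auto using purectx_evalctx; try (simpl; tauto).
  - destruct H'; discriminate.
  - apply purectx_comp_inv in HE. destruct H'; simpl in *; congruence || tauto.
Qed.

Lemma step_plugF_Reset_inv F q t' :
  evalctx F -> step (plugF F (Reset q)) t' ->
  exists p', step (Reset q) p' /\ t' = plugF F p'.
Proof.
  intros HF Hs; remember (plugF F (Reset q)) as T eqn:HT.
  destruct Hs as [F0 t v HF0 Hv | F0 E t HF0 HE | F0 v HF0 Hv].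
  - destruct (plugF_decomp F F0 (Reset q) (App (Lam t) v)) as [[H [-> Hq]] | [H [_ Hr]]];
      auto; try (simpl; tauto).
    + rewrite Hq, plugF_comp; eexists; split; [| reflexivity].
      apply step_beta; eauto using evalctx_comp_inv.
    + exfalso; destruct H; simpl in Hr; try discriminate; injection Hr as Hl Hr.
      * apply (plugF_Reset_not_value H q); congruence.
      * apply (plugF_Reset_not_value H q); rewrite <- Hl; exact I.
  - destruct (plugF_decomp F F0 (Reset q) (Reset (plugF E (Shift t))))
      as [[H [-> Hq]] | [H [-> Hr]]]; auto; try (simpl; tauto).
    + rewrite Hq, plugF_comp; eexists; split; [| reflexivity].
      apply step_shift; eauto using evalctx_comp_inv.
    + destruct H; simpl in Hr; try discriminate; injection Hr as Hr.
      * subst q; rewrite fctx_comp_hole; eexists; split; [| reflexivity].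
        apply (step_shift FHole); simpl; auto.
      * exfalso; apply evalctx_comp_inv in HF.
        apply (purectx_plugF_Shift_neq E H t q); auto.
  - destruct (plugF_decomp F F0 (Reset q) (Reset v)) as [[H [-> Hq]] | [H [-> Hr]]];
      auto; try (simpl; tauto).
    + rewrite Hq, plugF_comp; eexists; split; [| reflexivity].
      apply step_reset; eauto using evalctx_comp_inv.
    + destruct H; simpl in Hr; try discriminate; injection Hr as Hr.
      * subst q; rewrite fctx_comp_hole; exists v; split; auto.
        apply (step_reset FHole); simpl; auto.
      * exfalso; apply (plugF_Reset_not_value H q); congruence.
Qed.

Lemma program_step p p' : is_program p -> step p p' -> is_program p' \/ is_value p'.
Proof. intros Hp Hs; destruct Hs; destruct F; simpl in *; tauto. Qed.

Lemma value_irreducible t t' : is_value t -> ~ step t t'.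
Proof. intros Hv Hs; destruct Hs; apply plugF_is_value in Hv; simpl in Hv; tauto. Qed.

Lemma step_Reset_value v t : is_value v -> step (Reset v) t -> t = v.
Proof.
  intros Hv Hs; remember (Reset v) as T eqn:HT.
  destruct Hs; destruct F; simpl in HT; try discriminate; injection HT as HT; subst;
    try reflexivity; apply plugF_is_value in Hv; simpl in Hv; tauto.
Qed.

Lemma steps_Reset_value v w : is_value v -> steps (Reset v) w -> is_value w -> w = v.
Proof.
  intros Hv Hs Hw; apply clos_rt_rt1n in Hs; destruct Hs as [| t w Hs1 Hs2].
  - simpl in Hw; tauto.
  - apply step_Reset_value in Hs1; auto; subst t.
    destruct Hs2 as [| t' ? Hs2 _]; auto.
    exfalso; exact (value_irreducible _ _ Hv Hs2).
Qed.

(** * The compatible closure *)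

#[local] Hint Constructors tilde_open : core.

Lemma tilde_open_refl R t : tilde_open R t t.
Proof. induction t; auto. Qed.

Lemma tilde_open_mono (R S : rel) :
  (forall a b, R a b -> tilde_open S a b) ->
  forall a b, tilde_open R a b -> tilde_open S a b.
Proof. intros HRS a b H; induction H; auto. Qed.

Lemma tilde_open_lift G a b c :
  env_ok G -> tilde_open G a b -> tilde_open G (lift c a) (lift c b).
Proof.
  intros HG H; revert c; induction H; intros c; simpl; auto.
  - destruct (HG _ _ H) as (_ & H0 & _ & H1).
    rewrite (lift_closed_at t0 0 c), (lift_closed_at t1 0 c); auto; lia.
  - destruct (n <? c); auto.
Qed.

Lemma tilde_open_subst G b0 b1 j s0 s1 :
  env_ok G -> tilde_open G b0 b1 -> tilde_open G s0 s1 ->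
  tilde_open G (subst j s0 b0) (subst j s1 b1).
Proof.
  intros HG H; revert j s0 s1; induction H; intros j s0 s1 Hs; simpl;
    auto using tilde_open_lift.
  - destruct (HG _ _ H) as (_ & H0 & _ & H1).
    rewrite (subst_closed_at t0 0 j s0), (subst_closed_at t1 0 j s1); auto; lia.
  - destruct (n =? j); auto. destruct (j <? n); auto.
Qed.

Lemma tilde_open_is_value G v w : env_ok G -> tilde_open G v w -> is_value v -> is_value w.
Proof. intros HG H Hv; destruct H; simpl in *; auto. apply (HG _ _ H). Qed.

Lemma tilde_open_Lam_inv G a t :
  tilde_open G (Lam a) t -> G (Lam a) t \/ exists a', t = Lam a' /\ tilde_open G a a'.
Proof. intros H; inversion H; subst; eauto. Qed.

Lemma tilde_open_App_inv G a b t :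
  env_ok G -> tilde_open G (App a b) t ->
  exists a' b', t = App a' b' /\ tilde_open G a a' /\ tilde_open G b b'.
Proof. intros HG H; inversion H; subst; eauto. destruct (HG _ _ H0) as [[] _]. Qed.

Lemma tilde_open_Shift_inv G a t :
  env_ok G -> tilde_open G (Shift a) t -> exists a', t = Shift a' /\ tilde_open G a a'.
Proof. intros HG H; inversion H; subst; eauto. destruct (HG _ _ H0) as [[] _]. Qed.

Lemma tilde_open_Reset_inv G a t :
  env_ok G -> tilde_open G (Reset a) t -> exists a', t = Reset a' /\ tilde_open G a a'.
Proof. intros HG H; inversion H; subst; eauto. destruct (HG _ _ H0) as [[] _]. Qed.

(** * Related evaluation contexts *)

(* The open counterpart of [hat]: closedness is only imposed once a term is plugged. *)
Inductive fctx_rel (G : rel) : fctx -> fctx -> Prop :=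
| fctx_rel_hole : fctx_rel G FHole FHole
| fctx_rel_appR v0 v1 F0 F1 : is_value v0 -> is_value v1 -> tilde_open G v0 v1 ->
    fctx_rel G F0 F1 -> fctx_rel G (FAppR v0 F0) (FAppR v1 F1)
| fctx_rel_appL F0 F1 u0 u1 : fctx_rel G F0 F1 -> tilde_open G u0 u1 ->
    fctx_rel G (FAppL F0 u0) (FAppL F1 u1)
| fctx_rel_reset F0 F1 : fctx_rel G F0 F1 -> fctx_rel G (FReset F0) (FReset F1).

#[local] Hint Constructors fctx_rel : core.

Lemma fctx_rel_evalctx G F0 F1 : fctx_rel G F0 F1 -> evalctx F0 /\ evalctx F1.
Proof. intros H; induction H; simpl; tauto. Qed.

Lemma fctx_rel_purectx G F0 F1 : fctx_rel G F0 F1 -> purectx F0 -> purectx F1.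
Proof. intros H; induction H; simpl; tauto. Qed.

Lemma fctx_rel_hole_l G F1 : fctx_rel G FHole F1 -> F1 = FHole.
Proof. intros H; inversion H; auto. Qed.

Lemma fctx_rel_plugF G F0 F1 x y :
  fctx_rel G F0 F1 -> tilde_open G x y -> tilde_open G (plugF F0 x) (plugF F1 y).
Proof. intros H Hxy; induction H; simpl; auto. Qed.

Lemma fctx_rel_liftF G F0 F1 c :
  env_ok G -> fctx_rel G F0 F1 -> fctx_rel G (liftF c F0) (liftF c F1).
Proof.
  intros HG H; induction H; simpl; constructor; auto using tilde_open_lift.
  - destruct v0; simpl in *; tauto.
  - destruct v1; simpl in *; tauto.
Qed.

Lemma fctx_rel_comp G F0 F1 H0 H1 :
  fctx_rel G F0 F1 -> fctx_rel G H0 H1 -> fctx_rel G (fctx_comp F0 H0) (fctx_comp F1 H1).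
Proof. intros H HH; induction H; simpl; auto. Qed.

Lemma fctx_rel_mono (G G' : rel) F0 F1 :
  (forall a b, G a b -> tilde_open G' a b) -> fctx_rel G F0 F1 -> fctx_rel G' F0 F1.
Proof. intros HG H; induction H; constructor; eauto using tilde_open_mono. Qed.

Lemma fctx_rel_hat G F0 F1 x y :
  fctx_rel G F0 F1 -> closed (plugF F0 x) -> closed (plugF F1 y) -> hat G F0 F1.
Proof.
  unfold closed; intros H; induction H; simpl; intros Hc0 Hc1; constructor;
    try destruct Hc0, Hc1; repeat split; auto.
Qed.

Lemma hat_fctx_rel (R G : rel) F0 F1 :
  (forall a b, R a b -> tilde_open G a b) -> hat R F0 F1 -> fctx_rel G F0 F1.
Proof.
  intros HR H; induction H; constructor; auto;
    match goal with H : tilde _ _ _ |- _ => destruct H as [? _] end;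
    eapply tilde_open_mono; eauto.
Qed.

Lemma hat_mono (R G : rel) F0 F1 :
  (forall a b, R a b -> tilde_open G a b) -> hat R F0 F1 -> hat G F0 F1.
Proof.
  intros HR H; induction H; constructor; auto;
    match goal with H : tilde _ _ _ |- _ => destruct H as (? & ? & ?) end;
    repeat split; auto; eapply tilde_open_mono; eauto.
Qed.

Lemma hat_closed R F0 F1 x y :
  hat R F0 F1 -> closed x -> closed y -> closed (plugF F0 x) /\ closed (plugF F1 y).
Proof.
  unfold closed; intros H; induction H; simpl; intros; try tauto.
  - destruct H2 as (_ & ? & ?); destruct IHhat; auto.
  - destruct H0 as (_ & ? & ?); destruct IHhat; auto.
Qed.

Lemma fctx_rel_split_Reset G F0 F1 :
  fctx_rel G F0 F1 -> ~ purectx F0 ->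
  exists F0' F1' E0 E1,
    F0 = fctx_comp F0' (FReset E0) /\ F1 = fctx_comp F1' (FReset E1) /\
    fctx_rel G F0' F1' /\ fctx_rel G E0 E1 /\ purectx E0 /\ purectx E1.
Proof.
  intros H; induction H; simpl; intros Hp.
  - tauto.
  - destruct IHfctx_rel as (A & B & C & D & -> & -> & ? & ? & ? & ?); [tauto |].
    exists (FAppR v0 A), (FAppR v1 B), C, D; simpl; repeat split; auto.
  - destruct IHfctx_rel as (A & B & C & D & -> & -> & ? & ? & ? & ?); [tauto |].
    exists (FAppL A u0), (FAppL B u1), C, D; simpl; repeat split; auto.
  - destruct (purectx_dec F0) as [HF0 | HF0].
    + exists FHole, FHole, F0, F1; simpl; repeat split; eauto using fctx_rel_purectx.
    + destruct IHfctx_rel as (A & B & C & D & -> & -> & ? & ? & ? & ?); [tauto |].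
      exists (FReset A), (FReset B), C, D; simpl; repeat split; auto.
Qed.

Lemma fctx_rel_is_program G F0 F1 x y :
  fctx_rel G F0 F1 -> is_program (plugF F0 x) -> F0 = FHole \/ is_program (plugF F1 y).
Proof. intros H; destruct H; simpl; auto. Qed.

(* Since [G] relates only values, [to_base] never applies along the path to [r0]. *)
Lemma tilde_open_plugF_inv G F0 r0 t1 :
  env_ok G -> evalctx F0 -> ~ is_value r0 -> tilde_open G (plugF F0 r0) t1 ->
  exists F1 r1, t1 = plugF F1 r1 /\ fctx_rel G F0 F1 /\ tilde_open G r0 r1.
Proof.
  intros HG; revert t1; induction F0; simpl; intros t1 HF Hr H.
  - exists FHole, t1; auto.
  - destruct HF as [Hv HF].
    destruct (tilde_open_App_inv _ _ _ _ HG H) as (a' & b' & -> & H1 & H2).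
    destruct (IHF0 _ HF Hr H2) as (F1 & r1 & -> & ? & ?).
    exists (FAppR a' F1), r1; eauto 6 using tilde_open_is_value.
  - destruct (tilde_open_App_inv _ _ _ _ HG H) as (a' & b' & -> & H1 & H2).
    destruct (IHF0 _ HF Hr H1) as (F1 & r1 & -> & ? & ?).
    exists (FAppL F1 b'), r1; auto.
  - destruct (tilde_open_Reset_inv _ _ _ HG H) as (a' & -> & H1).
    destruct (IHF0 _ HF Hr H1) as (F1 & r1 & -> & ? & ?).
    exists (FReset F1), r1; auto.
Qed.

Lemma tilde_open_shift_step G F E t t1 :
  env_ok G -> evalctx F -> purectx E -> tilde_open G (plugF F (Reset (plugF E (Shift t)))) t1 ->
  exists t1', step t1 t1' /\
    tilde_open G (plugF F (Reset (subst0 (Lam (Reset (plugF (liftF 0 E) (Var 0)))) t))) t1'.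
Proof.
  intros HG HF HE Ht.
  destruct (tilde_open_plugF_inv G F (Reset (plugF E (Shift t))) _ HG HF (fun h => h) Ht)
    as (F1 & r1 & -> & HF01 & Hr).
  destruct (tilde_open_Reset_inv _ _ _ HG Hr) as (x1 & -> & Hx).
  destruct (tilde_open_plugF_inv G E (Shift t) _ HG (purectx_evalctx _ HE) (fun h => h) Hx)
    as (E1 & y1 & -> & HE01 & Hy).
  destruct (tilde_open_Shift_inv _ _ _ HG Hy) as (b1 & -> & Hb).
  destruct (fctx_rel_evalctx _ _ _ HF01) as [_ HF1].
  eexists; split; [apply step_shift; eauto using fctx_rel_purectx |].
  apply fctx_rel_plugF, to_reset, tilde_open_subst; auto.
  apply to_lam, to_reset, fctx_rel_plugF; auto using fctx_rel_liftF.
Qed.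

Lemma tilde_open_reset_step G F v t1 :
  env_ok G -> evalctx F -> is_value v -> tilde_open G (plugF F (Reset v)) t1 ->
  exists t1', step t1 t1' /\ tilde_open G (plugF F v) t1'.
Proof.
  intros HG HF Hv Ht.
  destruct (tilde_open_plugF_inv G F (Reset v) _ HG HF (fun h => h) Ht)
    as (F1 & r1 & -> & HF01 & Hr).
  destruct (tilde_open_Reset_inv _ _ _ HG Hr) as (v1 & -> & Hvv).
  destruct (fctx_rel_evalctx _ _ _ HF01) as [_ HF1].
  exists (plugF F1 v1); split; [apply step_reset; eauto using tilde_open_is_value |].
  apply fctx_rel_plugF; auto.
Qed.

(** * Transposition *)

Lemma tilde_open_transp R a b : tilde_open R a b -> tilde_open (transp term R) b a.
Proof. intros H; induction H; auto. Qed.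

Lemma tilde_transp R a b : tilde R a b -> tilde (transp term R) b a.
Proof. intros (H & ? & ?); repeat split; auto using tilde_open_transp. Qed.

Lemma hat_transp R F0 F1 : hat R F0 F1 -> hat (transp term R) F1 F0.
Proof. intros H; induction H; constructor; auto using tilde_transp. Qed.

Lemma fctx_rel_transp R F0 F1 : fctx_rel R F0 F1 -> fctx_rel (transp term R) F1 F0.
Proof. intros H; induction H; constructor; auto using tilde_open_transp. Qed.

Lemma env_ok_transp R : env_ok R -> env_ok (transp term R).
Proof. unfold env_ok, transp; intros H a b Hab; destruct (H _ _ Hab); tauto. Qed.

Lemma transp_add_pair v0 v1 G :
  transp term (add_pair v0 v1 G) = add_pair v1 v0 (transp term G).
Proof.
  apply functional_extensionality; intro a; apply functional_extensionality; intro b.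
  apply propositional_extensionality; unfold transp, add_pair; tauto.
Qed.

Definition transp_envrel (X : envrel) : envrel :=
  {| X_env := fun G => X_env X (transp term G);
     X_tri := fun G a b => X_tri X (transp term G) b a |}.

Lemma env_bisim_p_transp X : env_bisim_p X -> env_bisim_p (transp_envrel X).
Proof.
  intros (Hwe & Hwt & H1 & H2 & H2c & H3).
  split; [| split; [| split; [| split; [| split]]]]; simpl.
  - intros E HE; exact (env_ok_transp _ (Hwe _ HE)).
  - intros E t0 t1 H; destruct (Hwt _ _ _ H) as (HE & Hc1 & Hc0).
    exact (conj (env_ok_transp _ HE) (conj Hc0 Hc1)).
  - intros E t0 t1 H Hn E0 E1 HE0 HE1 Hh.
    apply H1; auto using hat_transp; tauto.
  - intros E p0 p1 Hp0 Hp1 H; destruct (H2c _ _ _ Hp1 Hp0 H) as [Ha Hb]; split.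
    + intros p0' Hs Hp; destruct (Ha _ Hs Hp) as (p1' & ? & ? & ?); eauto.
    + intros v0 Hs Hv; destruct (Hb _ Hs Hv) as (v1 & ? & ? & ?).
      exists v1; rewrite transp_add_pair; auto.
  - intros E p0 p1 Hp0 Hp1 H; destruct (H2 _ _ _ Hp1 Hp0 H) as [Ha Hb]; split.
    + intros p1' Hs Hp; destruct (Ha _ Hs Hp) as (p0' & ? & ? & ?); eauto.
    + intros v1 Hs Hv; destruct (Hb _ Hs Hv) as (v0 & ? & ? & ?).
      exists v0; rewrite transp_add_pair; auto.
  - intros E HE b0 b1 v0 v1 Hb Hv0 Hv1 Ht; apply H3; auto using tilde_transp.
Qed.

(** * Closing a bisimulation under contexts *)

Definition env_sub (F G : rel) : Prop := forall a b, F a b -> tilde G a b.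

Lemma env_sub_tilde_open F G a b : env_sub F G -> F a b -> tilde_open G a b.
Proof. intros H Hab; apply H; auto. Qed.

Lemma tilde_env_sub F G a b : env_sub F G -> tilde F a b -> tilde G a b.
Proof.
  intros H (Hab & ? & ?); repeat split; auto.
  eapply tilde_open_mono; [intros; eapply env_sub_tilde_open |]; eauto.
Qed.

Lemma env_sub_weaken F G G' : env_sub F G -> (forall a b, G a b -> G' a b) -> env_sub F G'.
Proof.
  intros H HG a b Hab; destruct (H _ _ Hab) as (? & ? & ?); repeat split; auto.
  eapply tilde_open_mono; [| eauto]; auto.
Qed.

Lemma env_sub_transp F G : env_sub F G -> env_sub (transp term F) (transp term G).
Proof. intros H a b Hab; apply tilde_transp, H, Hab. Qed.

Inductive ctx_rel (X : envrel) (G : rel) : term -> term -> Prop :=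
| ctx_rel_compat t0 t1 : tilde_open G t0 t1 -> ctx_rel X G t0 t1
| ctx_rel_plug F0 F1 p0 p1 : fctx_rel G F0 F1 -> is_program p0 -> is_program p1 ->
    X_tri X G p0 p1 -> ctx_rel X G (plugF F0 p0) (plugF F1 p1)
| ctx_rel_base t0 t1 : X_tri X G t0 t1 -> ctx_rel X G t0 t1.

Inductive cc_env (X : envrel) (F : rel) : Prop :=
| cc_env_intro G : env_ok F -> X_env X G -> env_sub F G -> cc_env X F.

Inductive cc_tri (X : envrel) (F : rel) (t0 t1 : term) : Prop :=
| cc_tri_intro G : env_ok F -> closed t0 -> closed t1 -> X_env X G -> env_sub F G ->
    ctx_rel X G t0 t1 -> cc_tri X F t0 t1.

Definition ctx_closure (X : envrel) : envrel := {| X_env := cc_env X; X_tri := cc_tri X |}.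

Lemma cc_env_add_pair X F G w0 w1 :
  env_ok F -> X_env X G -> env_sub F G -> tilde G w0 w1 -> is_value w0 -> is_value w1 ->
  cc_env X (add_pair w0 w1 F).
Proof.
  intros HF HG Hs Hw Hv0 Hv1; pose proof Hw as (_ & ? & ?).
  apply cc_env_intro with G; auto.
  - intros a b [[-> ->] | Hab]; auto.
  - intros a b [[-> ->] | Hab]; auto.
Qed.

Lemma transp_envrel_involutive X : transp_envrel (transp_envrel X) = X.
Proof. destruct X; reflexivity. Qed.

Lemma cc_tri_transp X F a b :
  cc_tri X F a b -> cc_tri (transp_envrel X) (transp term F) b a.
Proof.
  intros [G HF Hc0 Hc1 HXG Hs Hr]; apply cc_tri_intro with (transp term G);
    auto using env_ok_transp, env_sub_transp.
  destruct Hr as [t0 t1 Ht | F0 F1 p0 p1 HF01 Hp0 Hp1 Hp | t0 t1 Ht].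
  - apply ctx_rel_compat, tilde_open_transp, Ht.
  - apply (ctx_rel_plug (transp_envrel X)); auto using fctx_rel_transp.
  - apply ctx_rel_base; exact Ht.
Qed.

Lemma cc_env_transp X F : cc_env X F -> cc_env (transp_envrel X) (transp term F).
Proof.
  intros [G HF HXG Hs]; apply cc_env_intro with (transp term G);
    auto using env_ok_transp, env_sub_transp.
Qed.

Section ContextClosure.

Variable X : envrel.
Hypothesis HX : env_bisim_p X.

Lemma X_env_ok G : X_env X G -> env_ok G.
Proof. pose proof HX as (Hwe & _); apply Hwe. Qed.

Lemma X_tri_closed G t0 t1 : X_tri X G t0 t1 -> closed t0 /\ closed t1.
Proof. pose proof HX as (_ & Hwt & _); intros H; apply Hwt in H; tauto. Qed.

(* Clause (1) of [X] turns related non-programs under an impure context into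
   related programs under a smaller context. *)
Lemma X_tri_plug_nonpure G F0 F1 s0 s1 :
  fctx_rel G F0 F1 -> ~ purectx F0 ->
  closed (plugF F0 s0) -> closed (plugF F1 s1) -> X_tri X G s0 s1 ->
  exists A B p0 p1, plugF F0 s0 = plugF A p0 /\ plugF F1 s1 = plugF B p1 /\
    fctx_rel G A B /\ is_program p0 /\ is_program p1 /\ X_tri X G p0 p1.
Proof.
  intros HF Hnp Hc0 Hc1 Hs.
  assert (Hdec : (is_program s0 /\ is_program s1) \/ ~ (is_program s0 /\ is_program s1))
    by (destruct (is_program_dec s0), (is_program_dec s1); tauto).
  destruct Hdec as [[Hp0 Hp1] | Hn]; [exists F0, F1, s0, s1; auto 7 |].
  destruct (fctx_rel_split_Reset _ _ _ HF Hnp)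
    as (A & B & E0 & E1 & -> & -> & HAB & HE & HP0 & HP1).
  rewrite !plugF_comp in *; simpl in *.
  exists A, B, (Reset (plugF E0 s0)), (Reset (plugF E1 s1)); repeat split; auto.
  pose proof HX as (_ & _ & H1 & _); apply H1; auto.
  apply fctx_rel_hat with s0 s1;
    [exact HE | exact (closed_at_plugF_inv _ _ _ Hc0) | exact (closed_at_plugF_inv _ _ _ Hc1)].
Qed.

Lemma tilde_open_program_step G t0 t1 t0' :
  X_env X G -> tilde_open G t0 t1 -> closed t0 -> closed t1 -> is_program t0 ->
  step t0 t0' ->
  exists t1', step t1 t1' /\ (tilde_open G t0' t1' \/
    exists F0 F1 s0 s1, t0' = plugF F0 s0 /\ t1' = plugF F1 s1 /\ fctx_rel G F0 F1 /\
      ~ purectx F0 /\ X_tri X G s0 s1).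
Proof.
  intros HXG Ht Hc0 Hc1 Hp Hs; pose proof (X_env_ok _ HXG) as HG.
  destruct Hs as [F t v HF Hv | F E t HF HE | F v HF Hv].
  - destruct (tilde_open_plugF_inv G F (App (Lam t) v) _ HG HF (fun h => h) Ht)
      as (F1 & r1 & -> & HF01 & Hr).
    destruct (tilde_open_App_inv _ _ _ _ HG Hr) as (a1 & w1 & -> & Ha & Hw).
    assert (Hw1 : is_value w1) by (eapply tilde_open_is_value; eauto).
    destruct (fctx_rel_evalctx _ _ _ HF01) as [_ HF1].
    destruct (tilde_open_Lam_inv _ _ _ Ha) as [Hb | (b1 & -> & Hb)].
    + (* the abstractions are related by [G] itself: clause (3) of [X] applies *)
      destruct (HG _ _ Hb) as (_ & _ & Hva & _).
      destruct a1 as [| b1 | | |]; simpl in Hva; try tauto.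
      exists (plugF F1 (subst0 w1 b1)); split; [apply step_beta; auto |].
      right; exists F, F1, (subst0 v t), (subst0 w1 b1); repeat split; auto.
      { eapply plugF_is_program_nonpure; [exact Hp | simpl; tauto]. }
      pose proof HX as (_ & _ & _ & _ & _ & H3); apply H3; auto.
      apply closed_at_plugF_inv in Hc0, Hc1; destruct Hc0, Hc1; repeat split; auto.
    + exists (plugF F1 (subst0 w1 b1)); split; [apply step_beta; auto |].
      left; apply fctx_rel_plugF; [exact HF01 | apply tilde_open_subst; auto].
  - destruct (tilde_open_shift_step G F E t t1) as (t1' & Hs1 & Ht'); auto.
    exists t1'; split; [exact Hs1 | left; exact Ht'].
  - destruct (tilde_open_reset_step G F v t1) as (t1' & Hs1 & Ht'); auto.
    exists t1'; split; [exact Hs1 | left; exact Ht'].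
Qed.

(* What clause (2) of [ctx_closure X] requires of a reduct [t0] matched by [t1]. *)
Definition sim_answer (F : rel) (t0 t1 : term) : Prop :=
  (is_program t0 -> is_program t1 /\ cc_tri X F t0 t1) /\
  (is_value t0 -> is_value t1 /\ cc_env X (add_pair t0 t1 F)).

Lemma sim_answer_compat F G t0 t1 :
  env_ok F -> X_env X G -> env_sub F G -> closed t0 -> closed t1 ->
  tilde_open G t0 t1 -> sim_answer F t0 t1.
Proof.
  intros HF HXG Hs Hc0 Hc1 Ht; pose proof (X_env_ok _ HXG) as HG; split.
  - intros Hp; destruct t0; simpl in Hp; try tauto.
    destruct (tilde_open_Reset_inv _ _ _ HG Ht) as (t1' & -> & _).
    split; [exact I |]; apply cc_tri_intro with G; auto; apply ctx_rel_compat, Ht.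
  - intros Hv; assert (Hv1 : is_value t1) by (eapply tilde_open_is_value; eauto).
    split; [exact Hv1 |]; eapply cc_env_add_pair; eauto; repeat split; auto.
Qed.

Lemma sim_answer_plug F G F0 F1 p0 p1 :
  env_ok F -> X_env X G -> env_sub F G ->
  closed (plugF F0 p0) -> closed (plugF F1 p1) -> fctx_rel G F0 F1 ->
  is_program p0 -> is_program p1 -> X_tri X G p0 p1 ->
  sim_answer F (plugF F0 p0) (plugF F1 p1).
Proof.
  intros HF HXG Hs Hc0 Hc1 HF01 Hp0 Hp1 Hp; split.
  - intros Hprog; split.
    + destruct (fctx_rel_is_program _ _ _ _ p1 HF01 Hprog) as [-> | ?]; auto.
      rewrite (fctx_rel_hole_l _ _ HF01); exact Hp1.
    + apply cc_tri_intro with G; auto; apply ctx_rel_plug; auto.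
  - intros Hv; apply plugF_is_value in Hv as [-> Hv].
    destruct p0; simpl in *; tauto.
Qed.

Lemma sim_answer_nonpure F G F0 F1 s0 s1 :
  env_ok F -> X_env X G -> env_sub F G ->
  closed (plugF F0 s0) -> closed (plugF F1 s1) -> fctx_rel G F0 F1 ->
  ~ purectx F0 -> X_tri X G s0 s1 -> sim_answer F (plugF F0 s0) (plugF F1 s1).
Proof.
  intros HF HXG Hs Hc0 Hc1 HF01 Hnp Hst.
  destruct (X_tri_plug_nonpure G F0 F1 s0 s1)
    as (A & B & p0 & p1 & E0 & E1 & HAB & Hp0 & Hp1 & Hp); auto.
  rewrite E0, E1 in *; apply sim_answer_plug with G; auto.
Qed.

Lemma plugged_program_step F G F0 F1 q0 q1 t0' :
  env_ok F -> X_env X G -> env_sub F G ->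
  closed (plugF F0 q0) -> closed (plugF F1 q1) -> fctx_rel G F0 F1 ->
  is_program q0 -> is_program q1 -> X_tri X G q0 q1 ->
  step (plugF F0 q0) t0' -> exists t1', steps (plugF F1 q1) t1' /\ sim_answer F t0' t1'.
Proof.
  intros HF HXG Hs Hc0 Hc1 HF01 Hq0 Hq1 Hq Hstep.
  destruct (fctx_rel_evalctx _ _ _ HF01) as [HF0 HF1].
  destruct q0 as [| | | | q]; simpl in Hq0; try tauto.
  destruct (step_plugF_Reset_inv _ _ _ HF0 Hstep) as (q0' & Hsq & ->).
  pose proof HX as (_ & _ & _ & H2 & _); destruct (H2 G (Reset q) q1 I Hq1 Hq) as [H2a H2b].
  destruct (program_step (Reset q) q0' I Hsq) as [Hpq | Hvq].
  - destruct (H2a _ Hsq Hpq) as (q1' & Hss & Hpq1 & Hq').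
    destruct (X_tri_closed _ _ _ Hq') as [Hcq0 Hcq1].
    exists (plugF F1 q1'); split; [apply steps_plugF; auto |].
    apply sim_answer_plug with G; auto.
    + exact (closed_at_plugF _ _ _ _ Hc0 Hcq0).
    + exact (closed_at_plugF _ _ _ _ Hc1 Hcq1).
  - (* the inner program returned: its value joins the environment of [X] *)
    destruct (H2b _ Hsq Hvq) as (w1 & Hss & Hvw & Henv).
    destruct (X_env_ok _ Henv q0' w1 (or_introl (conj eq_refl eq_refl)))
      as (_ & Hcw0 & _ & Hcw1).
    exists (plugF F1 w1); split; [apply steps_plugF; auto |].
    apply sim_answer_compat with (add_pair q0' w1 G); auto.
    + eapply env_sub_weaken; eauto; intros; right; auto.
    + exact (closed_at_plugF _ _ _ _ Hc0 Hcw0).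
    + exact (closed_at_plugF _ _ _ _ Hc1 Hcw1).
    + apply fctx_rel_plugF; [| apply to_base; left; auto].
      eapply fctx_rel_mono; [| eauto]; intros; apply to_base; right; auto.
Qed.

Lemma cc_tri_program_step F p0 p1 t0' :
  cc_tri X F p0 p1 -> is_program p0 -> is_program p1 -> step p0 t0' ->
  exists t1', steps p1 t1' /\ sim_answer F t0' t1'.
Proof.
  intros [G HF Hc0 Hc1 HXG Hs Hr] Hp0 Hp1 Hstep.
  destruct Hr as [t0 t1 Ht | F0 F1 q0 q1 HF01 Hq0 Hq1 Hq | t0 t1 Ht].
  - destruct (tilde_open_program_step G t0 t1 t0' HXG Ht Hc0 Hc1 Hp0 Hstep)
      as (t1' & Hstep1 & Hr).
    pose proof (step_closed _ _ Hstep Hc0); pose proof (step_closed _ _ Hstep1 Hc1).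
    exists t1'; split; [apply rt_step, Hstep1 |].
    destruct Hr as [Ht' | (F0 & F1 & s0 & s1 & -> & -> & HF01 & Hnp & Hst)].
    + apply sim_answer_compat with G; auto.
    + apply sim_answer_nonpure with G; auto.
  - apply (plugged_program_step F G F0 F1 q0 q1); auto.
  - apply (plugged_program_step F G FHole FHole t0 t1); auto.
Qed.

Lemma cc_tri_Reset_plug F t0 t1 E0 E1 :
  cc_tri X F t0 t1 -> ~ (is_program t0 /\ is_program t1) ->
  purectx E0 -> purectx E1 -> hat F E0 E1 ->
  cc_tri X F (Reset (plugF E0 t0)) (Reset (plugF E1 t1)).
Proof.
  intros [G HF Hc0 Hc1 HXG Hs Hr] Hn HE0 HE1 Hh.
  destruct (hat_closed _ _ _ _ _ Hh Hc0 Hc1) as [Hd0 Hd1].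
  assert (HFG : forall a b, F a b -> tilde_open G a b) by eauto using env_sub_tilde_open.
  apply cc_tri_intro with G; auto.
  destruct Hr as [t0 t1 Ht | F0 F1 p0 p1 HF01 Hp0 Hp1 Hp | t0 t1 Ht].
  - apply ctx_rel_compat, to_reset, fctx_rel_plugF; eauto using hat_fctx_rel.
  - pose proof (ctx_rel_plug X G (FReset (fctx_comp E0 F0)) (FReset (fctx_comp E1 F1)) p0 p1)
      as Hplug.
    simpl in Hplug; rewrite !plugF_comp in Hplug.
    apply Hplug; auto.
    apply fctx_rel_reset, fctx_rel_comp; eauto using hat_fctx_rel.
  - apply ctx_rel_base; pose proof HX as (_ & _ & H1 & _); apply H1; eauto using hat_mono.
Qed.

Lemma cc_tri_beta F b0 b1 v0 v1 :
  cc_env X F -> F (Lam b0) (Lam b1) -> is_value v0 -> is_value v1 -> tilde F v0 v1 ->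
  cc_tri X F (subst0 v0 b0) (subst0 v1 b1).
Proof.
  intros [G HF HXG Hs] Hb Hv0 Hv1 Ht; pose proof (X_env_ok _ HXG) as HG.
  destruct (Hs _ _ Hb) as (Hbb & Hcb0 & Hcb1).
  pose proof (tilde_env_sub _ _ _ _ Hs Ht) as HtG; destruct HtG as (Hvv & Hcv0 & Hcv1).
  destruct (tilde_open_Lam_inv _ _ _ Hbb) as [HbG | (b1' & Heq & Hb')].
  - pose proof HX as (_ & _ & _ & _ & _ & H3).
    pose proof (H3 _ HXG _ _ _ _ HbG Hv0 Hv1 (conj Hvv (conj Hcv0 Hcv1))) as Hx.
    destruct (X_tri_closed _ _ _ Hx).
    apply cc_tri_intro with G; auto; apply ctx_rel_base, Hx.
  - injection Heq as <-; unfold closed in *; simpl in Hcb0, Hcb1.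
    apply cc_tri_intro with G; auto.
    + apply closed_at_subst; auto.
    + apply closed_at_subst; auto.
    + apply ctx_rel_compat, tilde_open_subst; auto.
Qed.

End ContextClosure.

Lemma ctx_closure_bisim X : env_bisim_p X -> env_bisim_p (ctx_closure X).
Proof.
  intros HX; split; [| split; [| split; [| split; [| split]]]]; simpl.
  - intros F [G HF _ _]; exact HF.
  - intros F t0 t1 [G HF Hc0 Hc1 _ _ _]; auto.
  - intros; apply cc_tri_Reset_plug; auto.
  - intros F p0 p1 Hp0 Hp1 H; split.
    + intros p0' Hs Hp.
      destruct (cc_tri_program_step X HX F p0 p1 p0' H Hp0 Hp1 Hs) as (p1' & ? & [Ha _]).
      exists p1'; split; [| apply Ha]; auto.
    + intros v0 Hs Hv.
      destruct (cc_tri_program_step X HX F p0 p1 v0 H Hp0 Hp1 Hs) as (v1 & ? & [_ Hb]).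
      exists v1; split; [| apply Hb]; auto.
  - (* the symmetric clauses are the forward ones for the transposed relation *)
    intros F p0 p1 Hp0 Hp1 H.
    pose proof (env_bisim_p_transp X HX) as HXt.
    pose proof (cc_tri_transp X F p0 p1 H) as Ht.
    split.
    + intros p1' Hs Hp.
      destruct (cc_tri_program_step _ HXt _ p1 p0 p1' Ht Hp1 Hp0 Hs)
        as (p0' & ? & [Ha _]).
      destruct (Ha Hp) as [? Ht']; apply cc_tri_transp in Ht'.
      rewrite transp_envrel_involutive in Ht'; eauto.
    + intros v1 Hs Hv.
      destruct (cc_tri_program_step _ HXt _ p1 p0 v1 Ht Hp1 Hp0 Hs)
        as (v0 & ? & [_ Hb]).
      destruct (Hb Hv) as [? He]; apply cc_env_transp in He.
      rewrite transp_envrel_involutive, transp_add_pair in He; eauto.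
  - intros F HF b0 b1 v0 v1 Hb Hv0 Hv1 Ht; apply cc_tri_beta; auto.
Qed.

Lemma env_bisim_p_value_env X E v0 v1 :
  env_bisim_p X -> X_tri X E v0 v1 -> is_value v0 -> is_value v1 ->
  X_env X (add_pair v0 v1 E).
Proof.
  intros HX Hv Hv0 Hv1; destruct HX as (_ & _ & H1 & H2 & _).
  assert (Hr : X_tri X E (Reset v0) (Reset v1)).
  { apply (H1 E v0 v1 Hv) with (E0 := FHole) (E1 := FHole); simpl; auto.
    - destruct v0; simpl in *; tauto.
    - constructor. }
  destruct (H2 E (Reset v0) (Reset v1) I I Hr) as [_ Hval].
  destruct (Hval v0 (step_reset FHole v0 I Hv0) Hv0) as (w & Hs & Hw & Henv).
  rewrite <- (steps_Reset_value v1 w Hv1 Hs Hw); exact Henv.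
Qed.

Lemma tilde_open_plugC G C t0 t1 :
  tilde_open G t0 t1 -> tilde_open G (plugC C t0) (plugC C t1).
Proof. intros Ht; induction C; simpl; auto using tilde_open_refl. Qed.

Theorem lemma13 (E : rel) (v0 v1 : term) :
  env_ok E ->
  is_value v0 -> closed v0 -> is_value v1 -> closed v1 ->
  approx_p E v0 v1 ->
  forall C : ctx, closed (plugC C v0) -> closed (plugC C v1) ->
    approx_p E (plugC C v0) (plugC C v1).
Proof.
  intros HE Hv0 Hc0 Hv1 Hc1 [X [HX Hv]] C HC0 HC1.
  exists (ctx_closure X); split; [apply ctx_closure_bisim, HX |].
  apply cc_tri_intro with (add_pair v0 v1 E); auto.
  - apply env_bisim_p_value_env; auto.
  - intros a b Hab; destruct (HE _ _ Hab) as (_ & ? & _ & ?).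
    repeat split; auto; apply to_base; right; exact Hab.
  - apply ctx_rel_compat, tilde_open_plugC, to_base; left; auto.
Qed.
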